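(* Let $n\ge 3$ and let $D$ be a strongly connected spanning subdigraph of $\overleftrightarrow{C_n}$ having $k\ge 1$ asymmetric arcs. Then $rc^*(D)=n-1$ if $k\le 2$, and $rc^*(D)=n$ if $k\ge 3$. Moreover, if $k\ge 3$, then $rc^*(D)=src^*(D)=n$.
   Context: $\overleftrightarrow{C_n}$ denotes the biorientation of the cycle $C_n$ on $n$ vertices (each edge $uv$ replaced by arcs $uv$ and $vu$). An arc $uv$ of a digraph $D$ is asymmetric if $vu\notin A(D)$. For a strongly connected digraph $D$ and an arc-colouring $\Gamma:A(D)\to\{1,\dots,k\}$, a directed path is rainbow if its arcs have pairwise distinct colours. $\Gamma$ is rainbow connected if for every ordered pair of distinct vertices $x,y$ there is a rainbow directed $xy$-path; $rc^*(D)$ is the minimum $k$ admitting such a colouring. $\Gamma$ is strongly rainbow connected if for every ordered pair of distinct vertices $x,y$ there is a rainbow directed $xy$-path of length $d_D(x,y)$; $src^*(D)$ is the minimum such $k$. *)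

From mathcomp Require Import all_boot.
Set Implicit Arguments. Unset Strict Implicit. Unset Printing Implicit Defensive.

(* Vertices of C_n are 'I_n; a digraph on 'I_n is given by its arc set. *)
Definition darc (n : nat) := ('I_n * 'I_n)%type.

Definition cyc_adj (n : nat) (i j : 'I_n) : bool :=
  (nat_of_ord j == i.+1 %% n) || (nat_of_ord i == j.+1 %% n).

Definition biorient_cycle (n : nat) : {set darc n} :=
  [set a | cyc_adj a.1 a.2].

Definition arel (n : nat) (A : {set darc n}) : rel 'I_n :=
  fun u v => (u, v) \in A.

Definition strongly_connected (n : nat) (A : {set darc n}) : Prop :=
  forall x y : 'I_n, connect (arel A) x y.

Definition asym_arcs (n : nat) (A : {set darc n}) : {set darc n} :=
  [set a in A | (a.2, a.1) \notin A].

Definition dipath (n : nat) (A : {set darc n}) (x y : 'I_n) (p : seq 'I_n) : bool :=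
  [&& path (arel A) x p, last x p == y & uniq (x :: p)].

(* Arcs of the path x :: p; its length is size p. *)
Definition path_arcs (n : nat) (x : 'I_n) (p : seq 'I_n) : seq (darc n) :=
  zip (x :: p) p.

Definition rainbow (n k : nat) (c : darc n -> 'I_k) (x : 'I_n) (p : seq 'I_n) : bool :=
  uniq (map c (path_arcs x p)).

Definition is_dist (n : nat) (A : {set darc n}) (x y : 'I_n) (l : nat) : Prop :=
  (exists p, dipath A x y p /\ size p = l) /\
  (forall q, dipath A x y q -> l <= size q).

Definition rainbow_connected (n k : nat) (A : {set darc n}) (c : darc n -> 'I_k) : Prop :=
  forall x y : 'I_n, x != y -> exists p, dipath A x y p /\ rainbow c x p.

Definition strongly_rainbow_connected (n k : nat) (A : {set darc n}) (c : darc n -> 'I_k) : Prop :=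
  forall x y : 'I_n, x != y -> forall l, is_dist A x y l ->
    exists p, [/\ dipath A x y p, size p = l & rainbow c x p].

Definition is_rc (n : nat) (A : {set darc n}) (m : nat) : Prop :=
  (exists c : darc n -> 'I_m, rainbow_connected A c) /\
  (forall k (c : darc n -> 'I_k), rainbow_connected A c -> m <= k).

Definition is_src (n : nat) (A : {set darc n}) (m : nat) : Prop :=
  (exists c : darc n -> 'I_m, strongly_rainbow_connected A c) /\
  (forall k (c : darc n -> 'I_k), strongly_rainbow_connected A c -> m <= k).

From mathcomp Require Import all_boot zify.
Set Implicit Arguments. Unset Strict Implicit. Unset Printing Implicit Defensive.

(* Let u -> s u be an asymmetric arc, where s is a direction of travel around
   C_n. The only path from s u back to u goes all the way round in direction s,
   so every arc v -> s v is present, every asymmetric arc points in direction s,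
   and a rainbow colouring needs at least n - 1 colours. Given two arcs i -> s i
   and j -> s j, three asymmetric arcs provide one, w -> s w, with w distinct
   from i and j; the forced path from s w to w passes through both i -> s i and
   j -> s j, so all n arcs v -> s v get distinct colours. Conversely, giving both arcs between v and s v the colour v makes
   every path rainbow. With at most two asymmetric arcs e1 -> s e1 and
   e2 -> s e2 the colours e1 and e2 may be merged: whenever the path from x to y
   in direction s uses both, the path in the opposite direction uses neither,
   and all its arcs are present. *)

Lemma iterK (T : Type) (f g : T -> T) : cancel g f -> forall j x, iter j f (iter j g x) = x.
Proof. by move=> gK; elim=> [//|j IHj] x; rewrite iterSr iterS gK IHj. Qed.

Lemma uniq_size_leq_card (T : finType) (s : seq T) : uniq s -> size s <= #|T|.
Proof. by move=> Us; rewrite -(card_uniqP Us) max_card. Qed.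

Lemma map_uniq_inj_in (T T' : eqType) (g : T -> T') (s : seq T) :
  uniq (map g s) -> {in s &, injective g}.
Proof.
elim: s => [//|z s IHs] /= /andP[gz_s Us] x y; rewrite !inE.
case/orP=> [/eqP->|x_s]; case/orP=> [/eqP->|y_s] //.
- by move=> gzy; move: gz_s; rewrite gzy map_f.
- by move=> gxz; move: gz_s; rewrite -gxz map_f.
- exact: IHs.
Qed.

Lemma path_trajectE (T : Type) (e : rel T) (f : T -> T) x m :
  path e x (traject f (f x) m) = all (fun v => e v (f v)) (traject f x m).
Proof. by elim: m x => [//|m IHm] x /=; rewrite IHm. Qed.

Lemma map_traject (T : Type) (f : T -> T) x m :
  map f (traject f x m) = traject f (f x) m.
Proof. by elim: m x => [//|m IHm] x /=; rewrite IHm. Qed.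

Lemma path_arcs_traject n (f : 'I_n -> 'I_n) x m :
  path_arcs x (traject f (f x) m) = [seq (v, f v) | v <- traject f x m].
Proof. by elim: m x => [//|m IHm] x; rewrite /path_arcs /= -IHm. Qed.

Lemma mem_path_arcs n (e : rel 'I_n) x p a b :
  path e x p -> (a, b) \in path_arcs x p -> [&& e a b, a \in x :: p & b \in x :: p].
Proof.
elim: p x => [//|y p IHp] x /= /andP[exy p_path]; rewrite inE.
case/orP=> [/eqP[-> ->]|ab_p]; first by rewrite exy !inE !eqxx orbT.
by case/and3P: (IHp y p_path ab_p) => -> a_p b_p; rewrite in_cons a_p in_cons b_p !orbT.
Qed.

Lemma arel_cyc_adj n (A : {set darc n}) u v :
  A \subset biorient_cycle n -> arel A u v -> cyc_adj u v.
Proof. by move=> /subsetP sA /sA; rewrite inE. Qed.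

Lemma strongly_connected_dipath n (A : {set darc n}) x y :
  strongly_connected A -> exists p, dipath A x y p.
Proof.
move=> scA; have /connectP[p xp ->] := scA x y.
by case/shortenP: xp => p' xp' Up' _; exists p'; rewrite /dipath xp' Up' eqxx.
Qed.

Lemma strongly_connected_dist n (A : {set darc n}) x y :
  strongly_connected A -> exists l, is_dist A x y l.
Proof.
move=> scA; have [p xyp] := strongly_connected_dipath x y scA.
have ex_len : exists l, [exists q : l.-tuple 'I_n, dipath A x y q].
  by exists (size p); apply/existsP; exists (in_tuple p).
case: (ex_minnP ex_len) => l /existsP[q xyq] l_min.
exists l; split; first by exists q; rewrite size_tuple.
by move=> q' xyq'; apply: l_min; apply/existsP; exists (in_tuple q').
Qed.

Lemma strongly_rainbow_connected_rc n k (A : {set darc n}) (c : darc n -> 'I_k) :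
  strongly_connected A -> strongly_rainbow_connected A c -> rainbow_connected A c.
Proof.
move=> scA src x y xy; have [l dl] := strongly_connected_dist x y scA.
by have [p [xyp _ rb]] := src x y xy l dl; exists p.
Qed.

(* A direction of travel [s] around C_n, with [t] the opposite direction; the
   reverse orientation is handled by [orientation_sym]. *)
Record cycle_orientation n (s t : 'I_n -> 'I_n) : Prop := CycleOrientation {
  orientation_succK : cancel s t;
  orientation_predK : cancel t s;
  orientation_adj : forall i j, cyc_adj i j = (j == s i) || (i == s j);
  orientation_period : forall x j, 0 < j < n -> iter j s x != x;
  orientation_iter_n : forall x, iter n s x = x }.

Lemma iter_ordS n (x : 'I_n) j : val (iter j (@ordS n) x) = (x + j) %% n.
Proof.
elim: j => [|j IHj] /=; first by rewrite addn0 modn_small.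
by rewrite IHj addnS -addn1 modnDml addn1.
Qed.

Lemma ordS_orientation n : cycle_orientation (@ordS n) (@ord_pred n).
Proof.
split; [exact: ordSK | exact: ord_predK | by [] | |].
- move=> x j /andP[j_gt0 j_lt]; apply/eqP => /(congr1 val); rewrite iter_ordS => xjx.
  have /eqP : x + j = x + 0 %[mod n] by rewrite xjx addn0 modn_small.
  by rewrite eqn_modDl mod0n modn_small // => /eqP j0; rewrite j0 in j_gt0.
- by move=> x; apply: val_inj; rewrite iter_ordS modnDr modn_small.
Qed.

Lemma orientation_sym n (s t : 'I_n -> 'I_n) :
  cycle_orientation s t -> cycle_orientation t s.
Proof.
case=> sK tK adj per iter_n; split => //.
- move=> i j; rewrite adj orbC; congr orb.
  + by rewrite eq_sym (can2_eq sK tK) eq_sym.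
  + by rewrite eq_sym (can2_eq sK tK).
- move=> x j jn; apply: contraNneq (per x j jn) => tjx.
  by rewrite -{1}tjx iterK.
- by move=> x; rewrite -{1}(iter_n x) iterK.
Qed.

Section Orientation.

Variables (n : nat) (s t : 'I_n -> 'I_n).
Hypothesis so : cycle_orientation s t.

Lemma succ_neq w : 1 < n -> s w != w.
Proof. by move=> n_gt1; apply: (orientation_period so w (j := 1)); rewrite n_gt1. Qed.

Lemma pred_neq_succ v : 2 < n -> t v != s v.
Proof.
move=> n_gt2; apply/eqP => tsv.
have := orientation_period so v (j := 2); rewrite n_gt2 /= -tsv (orientation_predK so).
by rewrite eqxx => /(_ isT).
Qed.

Lemma iter_pred_subn x j : j <= n -> iter (n - j) t x = iter j s x.
Proof.
move=> jn; have sx : iter (n - j) s (iter j s x) = x.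
  by rewrite -iterD subnK // (orientation_iter_n so).
by rewrite -{1}sx (iterK (orientation_succK so)).
Qed.

Lemma uniq_traject_succ x m : m <= n -> uniq (traject s x m).
Proof.
elim: m => [//|m IHm] mn; rewrite trajectSr rcons_uniq IHm ?andbT; last by lia.
apply/trajectP => -[i im xi].
have /negP[] : iter (m - i) s (iter i s x) != iter i s x.
  by apply: (orientation_period so); lia.
by rewrite -iterD subnK ?xi //; lia.
Qed.

Lemma mem_traject_succ x y : y \in traject s x n.
Proof.
apply: contraT => y_notin.
have /uniq_size_leq_card : uniq (y :: traject s x n).
  by rewrite /= y_notin uniq_traject_succ.
by rewrite /= size_traject card_ord ltnn.
Qed.

Lemma mem_traject_succ_neq v w : v != w -> v \in traject s (s w) n.-1.
Proof.
move=> vw; have n_gt0 : 0 < n := leq_ltn_trans (leq0n v) (ltn_ord v).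
have split_last : traject s (s w) n = rcons (traject s (s w) n.-1) (iter n.-1 s (s w)).
  by rewrite -trajectSr prednK.
have := mem_traject_succ (s w) v; rewrite split_last mem_rcons inE.
by rewrite -iterSr prednK // (orientation_iter_n so) (negbTE vw).
Qed.

Lemma traject_succ_pred_disjoint x j w :
  0 < j -> w \in traject s x j -> w \notin traject t (t x) (n - j).
Proof.
move=> j_gt0 /trajectP[a aj ->]; apply/trajectP => -[b bj ab].
have /negP[] : iter (b.+1 + a) s x != x by apply: (orientation_period so); lia.
by rewrite iterD ab -iterSr (iterK (orientation_predK so)).
Qed.

Lemma cyc_path_fpath x p :
  path (@cyc_adj n) x (s x :: p) -> uniq (x :: s x :: p) -> fpath s x (s x :: p).
Proof.
elim: p x => [|z p IHp] x /=; first by rewrite eqxx.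
case/and3P=> _ sx_z p_path /and3P[x_notin sx_notin Up]; rewrite eqxx /=.
move: sx_z; rewrite (orientation_adj so).
case/orP=> [/eqP zE | /eqP /(can_inj (orientation_succK so)) xz].
  by subst z; apply: IHp; rewrite /= ?(orientation_adj so) ?eqxx ?sx_notin.
by move: x_notin; rewrite xz !inE eqxx orbT.
Qed.

Definition edge_of (a : darc n) : 'I_n := if a.2 == s a.1 then a.1 else a.2.

Lemma edge_of_eq x y a b : cyc_adj x y -> cyc_adj a b ->
  edge_of (x, y) = edge_of (a, b) -> (x == a) || (x == b).
Proof.
rewrite !(orientation_adj so) /edge_of /=.
case: (eqVneq y (s x)) => [->|ny] /=; case: (eqVneq b (s a)) => [->|nb] /=.
- by move=> _ _ ->; rewrite eqxx.
- by move=> _ _ ->; rewrite eqxx orbT.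
- by move=> /eqP -> _ <-; rewrite eqxx orbT.
- by move=> /eqP -> /eqP -> ->; rewrite eqxx.
Qed.

Lemma uniq_path_edges x p : path (@cyc_adj n) x p -> uniq (x :: p) ->
  uniq (map edge_of (path_arcs x p)).
Proof.
elim: p x => [//|y p IHp] x /= /andP[xy p_path] /andP[x_notin Up].
rewrite IHp // andbT; apply/mapP => -[[a b] ab_in xy_ab].
have /and3P[ab a_in b_in] := mem_path_arcs p_path ab_in.
by case/orP: (edge_of_eq xy ab xy_ab) => /eqP xE; move: x_notin; rewrite xE ?a_in ?b_in.
Qed.

Lemma edges_succ_path x j :
  map edge_of (path_arcs x (traject s (s x) j)) = traject s x j.
Proof.
rewrite path_arcs_traject -map_comp -[RHS]map_id.
by apply: eq_map => v; rewrite /= /edge_of /= eqxx.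
Qed.

Lemma edges_pred_path x j : 2 < n ->
  map edge_of (path_arcs x (traject t (t x) j)) = traject t (t x) j.
Proof.
move=> n_gt2; rewrite path_arcs_traject -map_comp -map_traject.
by apply: eq_map => v; rewrite /= /edge_of /= (negbTE (pred_neq_succ v n_gt2)).
Qed.

Lemma dipath_traject_succ (A : {set darc n}) x j : j < n ->
  {in traject s x j, forall v, (v, s v) \in A} ->
  dipath A x (iter j s x) (traject s (s x) j).
Proof.
move=> jn arcs_in; apply/and3P; split; last by rewrite -trajectS uniq_traject_succ.
- by rewrite path_trajectE; apply/allP.
- by rewrite last_traject.
Qed.

End Orientation.

Fact merge_ord_subproof n (e1 e2 : 'I_n) (e12 : e1 != e2) (i : 'I_n) :
  unbump e2 (if i == e2 then e1 else i : 'I_n) < n - 1.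
Proof.
have j_neq : (if i == e2 then e1 else i) != e2 by case: (eqVneq i e2).
by rewrite subn1; exact: (unlift_subproof (exist (fun j => j != e2) _ j_neq)).
Qed.

Definition merge_ord n (e1 e2 : 'I_n) (e12 : e1 != e2) (i : 'I_n) : 'I_(n - 1) :=
  Ordinal (merge_ord_subproof e12 i).

Lemma uniq_map_merge_ord n (e1 e2 : 'I_n) (e12 : e1 != e2) (s : seq 'I_n) :
  uniq s -> ~~ ((e1 \in s) && (e2 \in s)) -> uniq (map (merge_ord e12) s).
Proof.
move=> Us not_both; rewrite map_inj_in_uniq // => i j i_s j_s /(congr1 val) /=.
have neq_e2 k : (if k == e2 then e1 else k : 'I_n) != e2 :> nat.
  by case: (eqVneq k e2).
move/(congr1 (bump e2)); rewrite !unbumpK ?inE ?neq_e2 // => /val_inj.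
move: i_s j_s; case: (eqVneq i e2) => [-> | _]; case: (eqVneq j e2) => [-> | _] //.
- by move=> e2_s j_s e1j; move: not_both; rewrite e2_s e1j j_s.
- by move=> i_s e2_s ie1; move: not_both; rewrite e2_s -ie1 i_s.
Qed.

Section AsymmetricArc.

Variables (n : nat) (A : {set darc n}) (s t : 'I_n -> 'I_n) (u : 'I_n).
Hypotheses (so : cycle_orientation s t) (n_gt2 : 2 < n).
Hypotheses (sA : A \subset biorient_cycle n) (scA : strongly_connected A).
Hypothesis asym_u : (u, s u) \in asym_arcs A.

Let n_gt1 : 1 < n := ltnW n_gt2.

Lemma dipath_around w p :
  (s w, w) \notin A -> dipath A (s w) w p -> p = traject s (s (s w)) n.-1.
Proof.
move=> sw_w_notin /and3P[]; case: p => [_ /= /eqP sw_w _ | z p].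
  by move: (succ_neq so w n_gt1); rewrite sw_w eqxx.
move=> /= /andP[sw_z p_path] /eqP p_last Up.
have z_succ : z = s (s w).
  move: (arel_cyc_adj sA sw_z); rewrite (orientation_adj so) => /orP[/eqP // | /eqP].
  move/(can_inj (orientation_succK so)) => zw.
  by move: sw_z sw_w_notin; rewrite -zw /arel => ->.
subst z; have /fpathE p_traj : fpath s (s w) (s (s w) :: p).
  apply: (cyc_path_fpath so) Up; rewrite /= (orientation_adj so) eqxx /=.
  by apply: sub_path p_path => a b; apply: arel_cyc_adj.
have around : iter (size p).+2 s w = w by rewrite iterSr -last_traject -p_traj.
have size_le : (size p).+2 <= n.
  by have := uniq_size_leq_card (Up : uniq (s w :: s (s w) :: p)); rewrite card_ord.
have [size_lt | size_eq] : (size p).+2 < n \/ (size p).+2 = n by lia.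
  have := orientation_period so w (j := (size p).+2).
  by rewrite size_lt around eqxx => /(_ isT).
by rewrite p_traj; congr traject => /=; lia.
Qed.

Lemma succ_arc_in v : (v, s v) \in A.
Proof.
move: (asym_u); rewrite inE => /andP[u_su su_u].
have [p su_u_path] := strongly_connected_dipath (s u) u scA.
move: (su_u_path) => /and3P[]; rewrite (dipath_around su_u su_u_path) path_trajectE.
move=> /allP arcs_in _ _; have [-> // | vu] := eqVneq v u.
exact/arcs_in/(mem_traject_succ_neq so).
Qed.

Lemma asym_arc_succ a : a \in asym_arcs A -> a.2 = s a.1.
Proof.
case: a => x y; rewrite inE /= => /andP[xy yx_notin].
move: (arel_cyc_adj sA xy); rewrite (orientation_adj so) => /orP[/eqP // | /eqP xE].
by move: yx_notin; rewrite xE succ_arc_in.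
Qed.

Definition asym_tails : {set 'I_n} := [set w | (w, s w) \in asym_arcs A].

Lemma card_asym_tails : #|asym_tails| = #|asym_arcs A|.
Proof.
have -> : asym_arcs A = [set (w, s w) | w in asym_tails].
  apply/setP => -[x y]; apply/idP/imsetP => [xy_asym | [w w_tail [-> ->]]].
    by have /= yE := asym_arc_succ xy_asym; exists x; [rewrite inE -yE | rewrite yE].
  by rewrite inE in w_tail.
by rewrite card_imset // => v w [].
Qed.

Lemma pred_arc_in w : w \notin asym_tails -> (s w, w) \in A.
Proof. by rewrite !inE /= succ_arc_in negbK. Qed.

Lemma asym_tails_pair :
  #|asym_arcs A| <= 2 -> exists2 e, u != e & asym_tails \subset [set u; e].
Proof.
rewrite -card_asym_tails => tails_le2; have u_tail : u \in asym_tails by rewrite inE.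
case: (set_0Vmem (asym_tails :\ u)) => [tails_u | [e]].
  exists (s u); first by rewrite eq_sym (succ_neq so).
  apply/subsetP => w w_tail; rewrite !inE; apply/orP; left; apply: contraT => wu.
  have : w \in asym_tails :\ u by rewrite in_setD1 wu.
  by rewrite tails_u inE.
rewrite in_setD1 => /andP[eu e_tail]; exists e; first by rewrite eq_sym.
have /eqP <- // : [set u; e] == asym_tails.
by rewrite eqEcard cards2 eq_sym eu subUset !sub1set u_tail e_tail.
Qed.

Lemma asym_tails_avoid i j :
  3 <= #|asym_arcs A| -> exists2 w, w \in asym_tails & w \notin [set i; j].
Proof.
rewrite -card_asym_tails => tails_ge3; apply/subsetPn; apply: contraTN tails_ge3.
by move/subset_leq_card; rewrite cards2 -ltnNge => /leq_ltn_trans; apply; case: (i != j).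
Qed.

Lemma rainbow_around k (c : darc n -> 'I_k) w :
  rainbow_connected A c -> w \in asym_tails ->
  uniq [seq c (v, s v) | v <- traject s (s w) n.-1].
Proof.
move=> rcA; rewrite !inE => /andP[_ sw_w_notin].
have [p [sw_w_path rb]] := rcA (s w) w (succ_neq so w n_gt1).
by move: rb; rewrite /rainbow (dipath_around sw_w_notin sw_w_path) path_arcs_traject -map_comp.
Qed.

Lemma rc_colours_geq_pred k (c : darc n -> 'I_k) : rainbow_connected A c -> n - 1 <= k.
Proof.
move=> rcA; have u_tail : u \in asym_tails by rewrite inE.
have := uniq_size_leq_card (rainbow_around rcA u_tail).
by rewrite size_map size_traject card_ord subn1.
Qed.

Lemma rc_colours_geq k (c : darc n -> 'I_k) :
  3 <= #|asym_arcs A| -> rainbow_connected A c -> n <= k.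
Proof.
move=> asym_ge3 rcA.
suff c_inj : injective (fun v => c (v, s v)) by have := leq_card _ c_inj; rewrite !card_ord.
move=> i j cij; apply/eqP/contraT => ij.
have [w w_tail] := asym_tails_avoid i j asym_ge3; rewrite !inE => /norP[wi wj].
have inj_w := map_uniq_inj_in (rainbow_around rcA w_tail).
by move: ij; rewrite (inj_w i j) ?eqxx // (mem_traject_succ_neq so) // eq_sym.
Qed.

Lemma dipath_rainbow_edges x y p : dipath A x y p -> rainbow (edge_of s) x p.
Proof.
case/and3P=> xp _ Up; apply: (uniq_path_edges so) Up.
by apply: sub_path xp => a b; apply: arel_cyc_adj.
Qed.

Lemma edge_colouring_src : strongly_rainbow_connected A (edge_of s).
Proof.
move=> x y _ l [[p [xyp size_p]] _]; exists p; split=> //.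
exact: dipath_rainbow_edges xyp.
Qed.

Lemma merged_edge_colouring_rc e1 e2 (e12 : e1 != e2) :
  asym_tails \subset [set e1; e2] ->
  rainbow_connected A (fun a => merge_ord e12 (edge_of s a)).
Proof.
move=> tails_e x y xy.
have rainbow_avoiding p : dipath A x y p ->
    ~~ ((e1 \in map (edge_of s) (path_arcs x p)) && (e2 \in map (edge_of s) (path_arcs x p))) ->
    rainbow (fun a => merge_ord e12 (edge_of s a)) x p.
  move=> xyp not_both; rewrite /rainbow (map_comp (merge_ord e12) (edge_of s)).
  exact: uniq_map_merge_ord (dipath_rainbow_edges xyp) not_both.
have [j jn yE] := trajectP (mem_traject_succ so x y).
have j_gt0 : 0 < j by case: j jn yE => // _ yE; rewrite yE eqxx in xy.
case: (boolP ((e1 \in traject s x j) && (e2 \in traject s x j))).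
  case/andP=> e1_fwd e2_fwd.
  have bwd_no_tails v : v \in traject t (t x) (n - j) -> v \notin asym_tails.
    move=> v_bwd; apply: (contraL _ v_bwd); move/(subsetP tails_e); rewrite !inE.
    by case/orP=> /eqP ->; apply: (traject_succ_pred_disjoint so).
  have bwd_path : dipath A x y (traject t (t x) (n - j)).
    rewrite yE -(iter_pred_subn so x (ltnW jn)).
    apply: (dipath_traject_succ (orientation_sym so)) => [|v v_bwd]; first lia.
    rewrite -[v in (v, _)](orientation_predK so); apply/pred_arc_in/bwd_no_tails.
    by rewrite -map_traject map_f.
  exists (traject t (t x) (n - j)); split=> //; apply: rainbow_avoiding bwd_path _.
  by rewrite (edges_pred_path so) // (negbTE (traject_succ_pred_disjoint so j_gt0 e1_fwd)).
move=> not_both; have fwd_path : dipath A x y (traject s (s x) j).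
  by rewrite yE; apply: (dipath_traject_succ so) => // v _; apply: succ_arc_in.
exists (traject s (s x) j); split=> //; apply: rainbow_avoiding fwd_path _.
by rewrite edges_succ_path.
Qed.

Lemma is_rc_asym_le2 : #|asym_arcs A| <= 2 -> is_rc A (n - 1).
Proof.
move=> asym_le2; split; last by move=> k c; apply: rc_colours_geq_pred.
have [e ue tails_ue] := asym_tails_pair asym_le2.
by exists (fun a => merge_ord ue (edge_of s a)); apply: merged_edge_colouring_rc.
Qed.

Lemma is_rc_src_asym_ge3 : 3 <= #|asym_arcs A| -> is_rc A n /\ is_src A n.
Proof.
move=> asym_ge3; split; split.
- by exists (edge_of s); apply: strongly_rainbow_connected_rc scA edge_colouring_src.
- by move=> k c; apply: rc_colours_geq.
- by exists (edge_of s); apply: edge_colouring_src.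
- by move=> k c /(strongly_rainbow_connected_rc scA); apply: rc_colours_geq.
Qed.

End AsymmetricArc.

Lemma asym_arc_orientation n (A : {set darc n}) a :
  A \subset biorient_cycle n -> a \in asym_arcs A ->
  exists s t : 'I_n -> 'I_n, cycle_orientation s t /\ (a.1, s a.1) \in asym_arcs A.
Proof.
case: a => x y sA; rewrite inE /= => /andP[xy yx_notin].
move: (arel_cyc_adj sA xy); rewrite (orientation_adj (ordS_orientation n)).
case/orP=> [/eqP yE | /eqP xE].
  exists (@ordS n), (@ord_pred n); split; first exact: ordS_orientation.
  by rewrite inE -yE xy.
exists (@ord_pred n), (@ordS n); split; first exact/orientation_sym/ordS_orientation.
by rewrite inE xE ordSK -xE xy.
Qed.

Theorem theorem4 (n : nat) (A : {set darc n}) :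
  3 <= n ->
  A \subset biorient_cycle n ->
  strongly_connected A ->
  1 <= #|asym_arcs A| ->
  (#|asym_arcs A| <= 2 -> is_rc A (n - 1)) /\
  (3 <= #|asym_arcs A| -> is_rc A n /\ is_src A n).
Proof.
move=> n_gt2 sA scA; rewrite card_gt0 => /set0Pn[a a_asym].
have [s [t [so asym_a]]] := asym_arc_orientation sA a_asym.
split; first exact: (is_rc_asym_le2 so n_gt2 sA scA asym_a).
exact: (is_rc_src_asym_ge3 so n_gt2 sA scA asym_a).
Qed.
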